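(* Let $(a_i)_{i\in\mathbb N}\subset\mathbb R_+$ be nonincreasing and let $b_i>0$ for $i\in\mathbb N$. Then for $0<p<1$ and every $k\in\mathbb N$, $\sum_{i=k+1}^\infty a_ib_i\le\Bigl(\sum_{i\in\mathbb N}a_i^pb_i\Bigr)^{1/p}\Bigl(\sum_{i=1}^k b_i\Bigr)^{1-\frac1p}.$ *)

From HB Require Import structures.
From mathcomp Require Import all_boot all_order all_algebra.
From mathcomp Require Import all_classical all_reals all_analysis.

From HB Require Import structures.
From mathcomp Require Import all_boot all_order all_algebra.
From mathcomp Require Import all_classical all_reals all_analysis.
Set Implicit Arguments.
Unset Strict Implicit.
Import Order.TTheory GRing.Theory Num.Theory.
Local Open Scope ring_scope.

(* With x := a_(k+1), monotonicity gives a_i <= x^(1-p) a_i^p for i > k and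
   x^p B <= H, where B and H are the sums of b_i and a_i^p b_i over 1 <= i <= k.
   If S is the full sum of the a_i^p b_i, the tail is thus at most x^(1-p) S, and
   x^(1-p) = (x^p)^(1/p - 1) <= (S/B)^(1/p - 1); multiplying out gives
   S^(1/p) B^(1 - 1/p). *)

Lemma eseries_nat_cond (R : numFieldType) (f : (\bar R)^nat) N :
  (\sum_(N <= i <oo) f i = \sum_(N <= i <oo | (N <= i)%N) f i)%E.
Proof.
apply/congr_lim/funext => n; rewrite big_nat_cond [RHS]big_nat_cond.
by apply: eq_bigl => i; rewrite andbT andbAC andbb.
Qed.

Section powR_bounds.
Variable R : realType.

Lemma ge0_le_powR1B_mul (p x y : R) : p <= 1 -> 0 <= y <= x ->
  y <= x `^ (1 - p) * y `^ p.
Proof.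
move=> p1 /andP[y0 yx].
rewrite -{1}(powRr1 y0) -[in leLHS](subrK p 1) powRD; last first.
  by rewrite subrK oner_eq0.
by rewrite ler_wpM2r ?powR_ge0 // ge0_ler_powR ?nnegrE ?subr_ge0 // (le_trans y0).
Qed.

Lemma powR1B_mul_le (p x B S t : R) : 0 < p -> p <= 1 ->
  0 <= x -> 0 < B -> 0 <= t -> x `^ p * B <= S -> t <= S ->
  x `^ (1 - p) * t <= S `^ p^-1 * B `^ (1 - p^-1).
Proof.
move=> p0 p1 x0 B0 t0 xBS tS.
set q := p^-1.
have q1 : 1 <= q by rewrite invf_ge1.
have S0 : 0 <= S := le_trans t0 tS.
have x_pow : x `^ (1 - p) = (x `^ p * B) `^ (q - 1) * B `^ (1 - q).
  rewrite powRM ?powR_ge0 ?(ltW B0) // -powRrM mulrBr mulfV ?gt_eqF // mulr1.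
  rewrite -mulrA -powRD; last by rewrite (gt_eqF B0) implybT.
  by rewrite addrC addrA subrK subrr powRr0 mulr1.
have S_pow : S `^ q = S `^ (q - 1) * S.
  by rewrite -{3}(powRr1 S0) -powRD subrK // gt_eqF // (lt_le_trans ltr01 q1).
rewrite S_pow mulrAC ler_pM ?mulr_ge0 ?powR_ge0 // x_pow ler_wpM2r ?powR_ge0 //.
by rewrite ge0_ler_powR ?nnegrE ?subr_ge0 ?mulr_ge0 ?powR_ge0 ?(ltW B0).
Qed.

Lemma lee_powR1B_mul (p x B H : R) (T : \bar R) : 0 < p -> p <= 1 ->
  0 <= x -> 0 < B -> x `^ p * B <= H -> (0 <= T)%E ->
  ((x `^ (1 - p))%:E * T <= poweR (H%:E + T) p^-1 * (B `^ (1 - p^-1))%:E)%E.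
Proof.
move=> p0 p1 x0 B0 xBH; case: T => [t | | ] // t0.
  have H0 : 0 <= H by rewrite (le_trans _ xBH) ?mulr_ge0 ?powR_ge0 ?ltW.
  rewrite -EFinD poweR_EFin -EFinM lee_fin powR1B_mul_le //; last by rewrite lerDr.
  by rewrite (le_trans xBH) ?lerDl.
rewrite addey // poweRyr ?invr_neq0 ?gt_eqF // gt0_mulye ?leey //.
by rewrite lte_fin powR_gt0.
Qed.

End powR_bounds.

Section monotone_weights.
Variables (R : realType) (a b : nat -> R) (p : R).
Hypothesis a_ge0 : forall i, (1 <= i)%N -> 0 <= a i.
Hypothesis a_noninc : forall i j, (1 <= i)%N -> (i <= j)%N -> a j <= a i.
Hypothesis b_gt0 : forall i, (1 <= i)%N -> 0 < b i.
Hypotheses (p_gt0 : 0 < p) (p_le1 : p <= 1).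

Let term_ge0 i : (1 <= i)%N -> (0 <= ((a i) `^ p * b i)%:E)%E.
Proof. by move=> i1; rewrite lee_fin mulr_ge0 ?powR_ge0 ?ltW ?b_gt0. Qed.

Let tail_ge1 k i : (k < i)%N -> (1 <= i)%N := leq_ltn_trans (leq0n k).

Lemma head_sum_gt0 k : (1 <= k)%N -> 0 < \sum_(1 <= i < k.+1) b i.
Proof.
move=> k1; rewrite big_ltn //; apply: ltr_wpDr; last exact: b_gt0.
rewrite big_nat_cond sumr_ge0 // => i /andP[/andP[i1 _] _].
by rewrite ltW ?b_gt0 // (leq_trans _ i1).
Qed.

Lemma head_powR_sum_ge k :
  a k.+1 `^ p * \sum_(1 <= i < k.+1) b i <= \sum_(1 <= i < k.+1) a i `^ p * b i.
Proof.
rewrite mulr_sumr big_nat_cond [leRHS]big_nat_cond ler_sum // => i.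
case/andP=> /andP[i1 ik] _; apply: ler_wpM2r; first exact: ltW (b_gt0 i1).
apply: ge0_ler_powR; rewrite ?nnegrE ?(ltW p_gt0) ?a_ge0 //.
exact: a_noninc (ltnW ik).
Qed.

Lemma tail_series_le k :
  (\sum_(k.+1 <= i <oo) (a i * b i)%:E <=
    (a k.+1 `^ (1 - p))%:E * \sum_(k.+1 <= i <oo) ((a i) `^ p * b i)%:E)%E.
Proof.
rewrite eseries_nat_cond [in leRHS]eseries_nat_cond -nneseriesZl; last first.
  by move=> i /tail_ge1; exact: term_ge0.
apply: lee_nneseries => [i /tail_ge1 i1 _ | i ki].
  by rewrite lee_fin mulr_ge0 ?a_ge0 // ltW ?b_gt0.
have i1 := tail_ge1 ki.
rewrite -EFinM lee_fin mulrA ler_wpM2r ?(ltW (b_gt0 i1)) //.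
by apply: ge0_le_powR1B_mul; rewrite ?a_ge0 //= a_noninc.
Qed.

Lemma powR_series_split k :
  (\sum_(1 <= i <oo) ((a i) `^ p * b i)%:E =
    (\sum_(1 <= i < k.+1) a i `^ p * b i)%:E
    + \sum_(k.+1 <= i <oo) ((a i) `^ p * b i)%:E)%E.
Proof. by rewrite (nneseries_split _ k term_ge0) add1n sumEFin. Qed.

Lemma tail_series_ge0 k : (0 <= \sum_(k.+1 <= i <oo) ((a i) `^ p * b i)%:E)%E.
Proof. by apply: nneseries_ge0 => i /tail_ge1 i1 _; exact: term_ge0. Qed.

End monotone_weights.

Theorem lemma3p8 (R : realType) (a b : nat -> R) (p : R) (k : nat)
  (ha0 : forall i : nat, (1 <= i)%N -> 0 <= a i)
  (hadec : forall i j : nat, (1 <= i)%N -> (i <= j)%N -> a j <= a i)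
  (hb : forall i : nat, (1 <= i)%N -> 0 < b i)
  (hp0 : 0 < p) (hp1 : p < 1) (hk : (1 <= k)%N) :
  (\sum_(k.+1 <= i <oo) (a i * b i)%:E <=
     poweR (\sum_(1 <= i <oo) ((a i) `^ p * b i)%:E) p^-1
     * ((\sum_(1 <= i < k.+1) b i) `^ (1 - p^-1))%:E)%E.
Proof.
have p_le1 := ltW hp1.
rewrite (powR_series_split _ _ hb k).
apply: le_trans (tail_series_le ha0 hadec hb p_le1 k) _.
apply: lee_powR1B_mul => //.
- exact: ha0.
- exact: head_sum_gt0.
- exact: head_powR_sum_ge.
- exact: tail_series_ge0.
Qed.
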